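(* Let $m\le k\le n$ be positive integers, $\mathbf a_1,\dots,\mathbf a_n\in\mathbb R^m$. For a multiset $\mathcal R$ with support in $[n]$ let $f(\mathcal R)=[\det(\sum_{i\in\mathcal R}\mathbf a_i\mathbf a_i^\top)]^{1/m}$ (sum with multiplicity), and let $w^*=\max\{[\det(\sum_{i\in[n]}x_i\mathbf a_i\mathbf a_i^\top)]^{1/m}:\sum_ix_i=k,\ \mathbf x\in\mathbb Z_+^n\}$ be the optimal value of the $D$-optimal design problem with repetitions. Let $\hat{\mathbf x}\in\mathbb Q_+^n$ be a rational optimal solution of the relaxation $\max\{[\det(\sum_{i\in[n]}x_i\mathbf a_i\mathbf a_i^\top)]^{1/m}:\sum_ix_i=k,\ \mathbf x\in\mathbb R_+^n\}$. Algorithm A outputs the random multiset $\mathcal S$ of $k$ independent draws from $[n]$, each equal to $i$ with probability $\hat x_i/k$. Algorithm B, for a positive integer $q$ with $q\hat x_i\in\mathbb Z_+$ for all $i$, forms a collection $\mathcal A_q$ of $qk$ distinct items of which exactly $q\hat x_i$ carry label $i$, chooses a uniformly random $k$-element subset of $\mathcal A_q$, and outputs the multiset $\mathcal S_q$ of labels of the chosen items. Then, for $\mathcal T\in\{\mathcal S,\mathcal S_q\}$: (i) $(\mathbb E[(f(\mathcal T))^m])^{1/m}\ge\frac1e w^*$; (ii) for any $\epsilon\in(0,1)$, if $k\ge\frac{m-1}{\epsilon}$, then $(\mathbb E[(f(\mathcal T))^m])^{1/m}\ge(1-\epsilon)w^*$.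
   Context: $[n]=\{1,\dots,n\}$, $\mathbb Q_+$ the nonnegative rationals, $\mathbb Z_+$ the nonnegative integers, $\mathbb R_+$ the nonnegative reals. *)

From HB Require Import structures.
From mathcomp Require Import all_boot all_order all_algebra.
From mathcomp Require Import all_classical all_reals all_analysis.
Set Implicit Arguments. Unset Strict Implicit. Unset Printing Implicit Defensive.
Import Order.TTheory GRing.Theory Num.Theory.
Local Open Scope ring_scope.

Section Defs.
Variables (R : realType) (m n : nat) (a : 'I_n -> 'cV[R]_m).

Definition relobj (y : 'I_n -> R) : R :=
  powR (\det (\sum_(i < n) y i *: (a i *m (a i)^T))) (m%:R)^-1.

(* f(R) for a multiset R given as a sequence of labels (with multiplicity) *)
Definition fM (s : seq 'I_n) : R :=
  powR (\det (\sum_(i <- s) (a i *m (a i)^T))) (m%:R)^-1.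

(* w* : max over x in Z_+^n with sum x_i = k (each x_i <= k, so x : 'I_n -> 'I_k.+1) *)
Definition wstar (k : nat) : R :=
  \big[Num.max/0]_(x : {ffun 'I_n -> 'I_k.+1} | (\sum_(i < n) (x i : nat) == k)%N)
     relobj (fun i => (x i : nat)%:R).

Definition relax_optimal (k : nat) (x : 'I_n -> R) : Prop :=
  (forall i, 0 <= x i) /\ \sum_(i < n) x i = k%:R /\
  forall y : 'I_n -> R, (forall i, 0 <= y i) -> \sum_(i < n) y i = k%:R ->
    relobj y <= relobj x.

(* Algorithm A: k independent draws, draw j equals i with prob. x_i / k;
   E[f(S)^m] *)
Definition EA (k : nat) (x : 'I_n -> R) : R :=
  \sum_(t : {ffun 'I_k -> 'I_n})
     (\prod_(j < k) (x (t j) / k%:R)) * (fM [seq t j | j <- enum 'I_k]) ^+ m.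

(* Algorithm B: items 'I_(q*k) with labels lab; uniform random k-subset;
   E[f(S_q)^m] *)
Definition EB (k q : nat) (lab : 'I_(q * k) -> 'I_n) : R :=
  \sum_(S : {set 'I_(q * k)} | #|S| == k)
     ('C(q * k, k)%:R)^-1 * (fM [seq lab j | j <- enum S]) ^+ m.

End Defs.

(* Expanding det (sum_j w_j v_j v_j^T) multilinearly over m-tuples of indices,
   the terms of non-injective tuples vanish by alternation.  For both sampling
   schemes every injective m-tuple of draws behaves alike: for A it is again m
   independent draws from xhat/k, for B it is contained in C(qk-m, k-m) of the
   C(qk, k) equally likely samples.  Hence E[f(T)^m] = c * det (sum_i xhat_i a_i a_i^T)
   with c = k(k-1)...(k-m+1)/k^m for A and c = C(qk-m, k-m) q^m / C(qk, k) >= that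
   for B.  Optimality of xhat for the relaxation bounds w* by the m-th root of the
   determinant, and k(k-1)...(k-m+1)/k^m = prod_(i<m) (1 - i/k) is at least
   m!/m^m >= e^-m, and at least (1 - eps)^m once k >= (m-1)/eps. *)

From HB Require Import structures.
From mathcomp Require Import all_boot all_order all_algebra.
From mathcomp Require Import all_classical all_reals all_analysis.
From mathcomp Require Import lra zify fingroup perm.
Import Order.TTheory GRing.Theory Num.Theory.
Local Open Scope ring_scope.

Section OuterProductDet.
Context {R : comPzRingType} {m : nat}.

Definition vecs_mx (u : 'I_m -> 'cV[R]_m) : 'M[R]_m := \matrix_(r, c) u r c 0.

Definition diag_det_term (u : 'I_m -> 'cV[R]_m) : R :=
  (\prod_(r < m) u r r 0) * \det (vecs_mx u).

Lemma sum_scale_outer_entry (J : finType) (w : J -> R) (v : J -> 'cV[R]_m) r c :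
  (\sum_j w j *: (v j *m (v j)^T)) r c = \sum_j w j * (v j r 0 * v j c 0).
Proof. by rewrite summxE; apply: eq_bigr => j _; rewrite !mxE big_ord1 !mxE. Qed.

Lemma det_sum_scale_outer (J : finType) (w : J -> R) (v : J -> 'cV[R]_m) :
  \det (\sum_j w j *: (v j *m (v j)^T)) =
  \sum_(s : {ffun 'I_m -> J}) (\prod_(r < m) w (s r)) * diag_det_term (fun r => v (s r)).
Proof.
rewrite {1}/determinant.
under eq_bigr => p _.
  under eq_bigr => r _ do rewrite sum_scale_outer_entry.
  rewrite bigA_distr_bigA big_distrr /=.
  over.
rewrite exchange_big /=; apply: eq_bigr => s _.
rewrite /diag_det_term /determinant !big_distrr /=; apply: eq_bigr => p _.
rewrite !big_split /=.
under [X in _ = _ * (_ * (_ * X))]eq_bigr => r _ do rewrite mxE.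
have reorder (x y z t : R) : x * (y * (z * t)) = y * (z * (x * t)).
  by rewrite mulrCA [x * (z * t)]mulrCA.
exact: reorder.
Qed.

Lemma diag_det_term_eq0 (u : 'I_m -> 'cV[R]_m) r1 r2 :
  r1 != r2 -> u r1 = u r2 -> diag_det_term u = 0.
Proof.
move=> neq_r equ; rewrite /diag_det_term (determinant_alternate neq_r) ?mulr0 // => c.
by rewrite !mxE equ.
Qed.

Lemma diag_det_term_comp_noninj {J : finType} (v : J -> 'cV[R]_m) (s : 'I_m -> J) :
  ~~ injectiveb s -> diag_det_term (fun r => v (s r)) = 0.
Proof.
move=> /injectivePn [r1 [r2 neq_r eq_s]].
by rewrite (diag_det_term_eq0 _ _ _ neq_r) //= eq_s.
Qed.

Lemma sum_diag_det_term_perm (u : 'I_m -> 'cV[R]_m) :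
  \sum_(p : 'S_m) diag_det_term (fun r => u (p r)) = \det (vecs_mx u) ^+ 2.
Proof.
have termE (p : 'S_m) : diag_det_term (fun r => u (p r)) =
    ((-1) ^+ p * \prod_r (vecs_mx u)^T r (p r)) * \det (vecs_mx u).
  rewrite /diag_det_term.
  have -> : vecs_mx (fun r => u (p r)) = row_perm p (vecs_mx u).
    by apply/matrixP => i j; rewrite !mxE.
  rewrite row_permE det_mulmx det_perm.
  under eq_bigr => r _ do rewrite !mxE.
  by rewrite mulrA [_ * (-1) ^+ _]mulrC.
under eq_bigr => p _ do rewrite termE.
by rewrite -big_distrl /= -det_tr /determinant expr2.
Qed.

End OuterProductDet.

Lemma det_sum_scale_outer_ge0 (R : realDomainType) (m : nat) (J : finType)
    (w : J -> R) (v : J -> 'cV[R]_m) :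
  (forall j, 0 <= w j) -> 0 <= \det (\sum_j w j *: (v j *m (v j)^T)).
Proof.
move=> w_ge0; set D := \det _.
have D_perm (p : 'S_m) : D = \sum_(s : {ffun 'I_m -> J})
    (\prod_(r < m) w (s r)) * diag_det_term (fun r => v (s (p r))).
  have comp_p_inj : injective (fun s : {ffun 'I_m -> J} => [ffun r => s (p r)]).
    move=> s1 s2 /ffunP eq_s; apply/ffunP => r.
    by have := eq_s (p^-1 r)%g; rewrite !ffunE permKV.
  rewrite /D det_sum_scale_outer (reindex_inj comp_p_inj) /=.
  apply: eq_bigr => s _; under eq_bigr => r _ do rewrite ffunE.
  congr (_ * _); first by rewrite [RHS](reindex_inj (@perm_inj _ p)).
  by congr diag_det_term; apply: funext => r; rewrite ffunE.
(* Averaging over the permutations of each index tuple turns every term into a square. *)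
have : D *+ m`! = \sum_(s : {ffun 'I_m -> J})
    (\prod_(r < m) w (s r)) * \det (vecs_mx (fun r => v (s r))) ^+ 2.
  rewrite -card_Sn -sumr_const.
  under eq_bigr => p _ do rewrite (D_perm p).
  rewrite exchange_big /=; apply: eq_bigr => s _.
  by rewrite -big_distrr /= (@sum_diag_det_term_perm _ _ (fun r => v (s r))).
move/(congr1 (fun y => 0 <= y)); rewrite -mulr_natr pmulr_lge0 ?ltr0n ?fact_gt0 // => ->.
by apply: sumr_ge0 => s _; rewrite mulr_ge0 ?sqr_ge0 ?prodr_ge0.
Qed.

Section ProductWeights.
Context {R : comPzSemiRingType} {T : finType} {p : T -> R}.
Hypothesis p_sum1 : \sum_i p i = 1.

Lemma sum_indicator_mul (x0 : T) (F : T -> R) :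
  \sum_x (x == x0)%:R * F x = F x0.
Proof.
rewrite (bigD1 x0) //= eqxx mul1r big1 ?addr0 // => x /negbTE ->.
by rewrite mul0r.
Qed.

Lemma sum_prod_weights_fiber {k m : nat} {sig : 'I_m -> 'I_k} (tau : 'I_m -> T) :
  injective sig ->
  \sum_(t : {ffun 'I_k -> T}) (\prod_(j < k) p (t j)) * \prod_(r < m) (t (sig r) == tau r)%:R
  = \prod_(r < m) p (tau r).
Proof.
move=> sig_inj.
have split_j t : (\prod_(j < k) p (t j)) * \prod_(r < m) (t (sig r) == tau r)%:R =
    \prod_(j < k) (p (t j) * \prod_(r < m | sig r == j) (t j == tau r)%:R).
  rewrite big_split /= (partition_big sig predT) //=; congr (_ * _).
  by apply: eq_bigr => j _; apply: eq_bigr => r /eqP <-.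
under eq_bigr => t _ do rewrite split_j.
rewrite -(bigA_distr_bigA (fun j i => p i * \prod_(r < m | sig r == j) (i == tau r)%:R)).
rewrite [RHS](partition_big sig predT) //=; apply: eq_bigr => j _.
have [[r0 <-]|sig_not_j] := pselect (exists r0, sig r0 = j).
  have fiber1 : (fun r => predT r && (sig r == sig r0)) =1 pred1 r0.
    by move=> r /=; rewrite (inj_eq sig_inj).
  rewrite (big_pred1 r0 fiber1).
  under eq_bigr => i _ do rewrite (big_pred1 r0 fiber1) mulrC.
  exact: sum_indicator_mul.
have fiber0 : (fun r => predT r && (sig r == j)) =1 xpred0.
  by move=> r /=; apply/eqP => sig_r; apply: sig_not_j; exists r.
rewrite [RHS]big_pred0 // -[RHS]p_sum1; apply: eq_bigr => i _.
by rewrite big_pred0 ?mulr1.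
Qed.

Lemma sum_prod_weights_comp_inj {k m : nat} {sig : 'I_m -> 'I_k}
    (F : {ffun 'I_m -> T} -> R) :
  injective sig ->
  \sum_(t : {ffun 'I_k -> T}) (\prod_(j < k) p (t j)) * F [ffun r => t (sig r)] =
  \sum_(tau : {ffun 'I_m -> T}) (\prod_(r < m) p (tau r)) * F tau.
Proof.
move=> sig_inj.
have F_indicator t : F [ffun r => t (sig r)] =
    \sum_(tau : {ffun 'I_m -> T}) (\prod_(r < m) (t (sig r) == tau r)%:R) * F tau.
  rewrite (bigD1 [ffun r => t (sig r)]) //= [X in _ + X]big1 ?addr0.
    by rewrite big1 ?mul1r // => r _; rewrite ffunE eqxx.
  move=> tau /eqP neq_tau.
  have [r neq_r] : exists r, t (sig r) != tau r.
    apply/existsP; rewrite -negb_forall; apply/negP => /forallP eq_r; apply: neq_tau.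
    by apply/ffunP => r; rewrite ffunE (eqP (eq_r r)).
  by rewrite (bigD1 r) //= (negbTE neq_r) !mul0r.
under eq_bigr => t _ do rewrite F_indicator big_distrr /=.
rewrite exchange_big /=; apply: eq_bigr => tau _.
under eq_bigr => t _ do rewrite mulrA.
by rewrite -big_distrl /= sum_prod_weights_fiber.
Qed.

End ProductWeights.

Lemma card_supersets (T : finType) (A : {set T}) (k : nat) :
  (#|A| <= k <= #|T|)%N ->
  #|[set S : {set T} | A \subset S & #|S| == k]| = 'C(#|T| - #|A|, k - #|A|).
Proof.
move=> /andP[A_le_k k_le_T].
rewrite -(card_imset _ (@finset.setC_inj T)).
have cardC := cardsC A.
rewrite -[in RHS](bin_sub (_ : k - #|A| <= #|T| - #|A|)%N); last by lia.
have -> : (#|T| - #|A| = #|~: A|)%N by lia.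
rewrite -cards_draws; apply: eq_card => B.
rewrite -{1}(finset.setCK B) mem_imset; last exact: finset.setC_inj.
rewrite !inE finset.subsetC; congr (_ && _).
have cardCB := cardsC B; apply/eqP/eqP; lia.
Qed.

Lemma prod_mem_natr (R : comPzSemiRingType) (I T : finType) (f : I -> T) (S : {set T}) :
  \prod_i (f i \in S)%:R = (f @: [set: I] \subset S)%:R :> R.
Proof.
case: (boolP (_ \subset S)) => [im_sub|/fintype.subsetPn [_ /imsetP [i _ ->] f_notin]].
  by rewrite big1 // => i _; rewrite (fintype.subsetP im_sub) // imset_f.
by rewrite (bigD1 i) //= (negbTE f_notin) mul0r.
Qed.

Lemma sum_draws_prod_mem_inj (R : comPzSemiRingType) (T : finType) (k m : nat)
    (rho : 'I_m -> T) :
  injective rho -> (m <= k <= #|T|)%N ->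
  \sum_(S : {set T} | #|S| == k) \prod_(r < m) (rho r \in S)%:R =
  'C(#|T| - m, k - m)%:R :> R.
Proof.
move=> rho_inj k_range; under eq_bigr => S _ do rewrite prod_mem_natr.
set A := rho @: _; have card_A : #|A| = m by rewrite card_imset // cardsT card_ord.
rewrite (eq_bigr (fun S : {set T} => if A \subset S then 1 else 0 : R)) => [|S _];
  last by case: (A \subset S).
rewrite -big_mkcondr /= sumr_const -card_A -card_supersets ?card_A //.
by congr (_%:R); apply: eq_card => S; rewrite !inE andbC.
Qed.

Lemma sum_by_label {V : nmodType} {I J : finType} (lab : J -> I) (F : I -> V) :
  \sum_j F (lab j) = \sum_i F i *+ #|[set j | lab j == i]|.
Proof.
rewrite (partition_big lab predT) //=; apply: eq_bigr => i _.
rewrite (eq_bigr (fun _ => F i)) => [|j /eqP -> //].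
by rewrite sumr_const cardsE.
Qed.

Lemma ffact_ratioE (F : fieldType) (k m : nat) :
  (k ^_ m)%:R / k%:R ^+ m = \prod_(i < m) ((k - i)%:R / k%:R) :> F.
Proof. by rewrite ffact_prod natr_prod prodf_div prodr_const card_ord. Qed.

Lemma natr_expr_le_fact_expR (R : realType) (m : nat) :
  m%:R ^+ m <= m`!%:R * expR 1 ^+ m :> R.
Proof.
case: m => [|m]; first by rewrite !expr0 mul1r.
have fact_gt0 : 0 < m.+1`!%:R :> R by rewrite ltr0n fact_gt0.
rewrite -ler_pdivrMl // mulrC -expRM_natl mulr1.
apply: le_trans (expR_ge1Dxn m (ler0n _ m.+1)).
by rewrite lerDr.
Qed.

Lemma ffact_ratio_ge_expRN1 (R : realType) (k m : nat) : (m <= k)%N ->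
  (expR 1)^-1 ^+ m <= (k ^_ m)%:R / k%:R ^+ m :> R.
Proof.
move=> m_le_k; have [->|m_gt0] := posnP m; first by rewrite expr0 divr1.
apply: le_trans (_ : (m ^_ m)%:R / m%:R ^+ m <= _).
  rewrite ffactnn ler_pdivlMr ?exprn_gt0 ?ltr0n // exprVn.
  by rewrite ler_pdivrMl ?exprn_gt0 ?expR_gt0 // mulrC natr_expr_le_fact_expR.
rewrite !ffact_ratioE; apply: ler_prod => i _.
have k_gt0 : (0 < k)%N by apply: leq_trans m_le_k.
have i_lt_m := ltn_ord i; rewrite divr_ge0 ?ler0n //=.
rewrite ler_pdivrMr ?ltr0n // mulrAC.
by rewrite ler_pdivlMr ?ltr0n // -!natrM ler_nat; nia.
Qed.

Lemma ffact_ratio_ge_1Beps (R : realFieldType) (k m : nat) (eps : R) :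
  (m <= k)%N -> 0 < eps < 1 -> (m%:R - 1) / eps <= k%:R ->
  (1 - eps) ^+ m <= (k ^_ m)%:R / k%:R ^+ m.
Proof.
move=> m_le_k /andP[eps_gt0 eps_lt1]; rewrite ler_pdivrMr // => k_large.
rewrite ffact_ratioE -[m in (1 - eps) ^+ m]card_ord -prodr_const.
apply: ler_prod => i _; apply/andP; split; first lra.
have i_lt_m := ltn_ord i.
have k_gt0 : (0 < k)%N by apply: leq_trans m_le_k; apply: leq_ltn_trans i_lt_m.
rewrite ler_pdivlMr ?ltr0n // natrB; last by apply: leq_trans (ltnW i_lt_m) m_le_k.
have : i%:R <= m%:R - 1 :> R by rewrite lerBrDr natr1 ler_nat.
nra.
Qed.

Lemma mul_bin_ffact (N k m : nat) : (m <= k)%N -> (k <= N)%N ->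
  ('C(N, k) * k ^_ m = 'C(N - m, k - m) * N ^_ m)%N.
Proof.
move=> m_le_k k_le_N.
apply/eqP; rewrite -(eqn_pmul2r (fact_gt0 (k - m))) -mulnA ffact_fact // bin_ffact.
rewrite mulnAC bin_ffact -(eqn_pmul2r (fact_gt0 (N - k))) ffact_fact // mulnAC.
have -> : (N - k = N - m - (k - m))%N by lia.
by rewrite ffact_fact 1?mulnC ?ffact_fact //; lia.
Qed.

Lemma ffact_le_expn (n m : nat) : (n ^_ m <= n ^ m)%N.
Proof.
rewrite ffact_prod -[m in (_ <= _ ^ m)%N](card_ord m) -prod_nat_const.
by apply: leq_prod => i _; rewrite leq_subr.
Qed.

Lemma ffact_ratio_le_draws (R : realFieldType) (k m q : nat) : (m <= k)%N -> (0 < q)%N ->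
  (k ^_ m)%:R / k%:R ^+ m <= 'C(q * k - m, k - m)%:R / 'C(q * k, k)%:R * q%:R ^+ m :> R.
Proof.
move=> m_le_k q_gt0; have k_le_qk : (k <= q * k)%N by apply: leq_pmull.
have [->|m_gt0] := posnP m.
  by rewrite !expr0 !ffactn0 !subn0 divr1 mulr1 divff // pnatr_eq0 -lt0n bin_gt0.
have k_gt0 : (0 < k)%N by apply: leq_trans m_le_k.
rewrite ler_pdivrMr ?exprn_gt0 ?ltr0n // -!mulrA mulrCA [X in _ <= X]mulrC.
rewrite ler_pdivlMr ?ltr0n ?bin_gt0 //.
rewrite -!natrX -!natrM ler_nat mulnC mul_bin_ffact // -expnMn leq_mul2l.
by rewrite ffact_le_expn orbT.
Qed.

Section NatRoots.
Context {R : realType} {m : nat}.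
Hypothesis m_gt0 : (0 < m)%N.

Lemma powR_inv_natr_expr (d : R) : 0 <= d -> powR d (m%:R)^-1 ^+ m = d.
Proof.
move=> d_ge0; rewrite -powR_mulrn ?powR_ge0 // -powRrM mulVf ?powRr1 //.
by rewrite pnatr_eq0 -lt0n.
Qed.

Lemma powR_expr_inv_natr (b : R) : 0 <= b -> powR (b ^+ m) (m%:R)^-1 = b.
Proof.
move=> b_ge0; rewrite -powR_mulrn // -powRrM mulfV ?powRr1 //.
by rewrite pnatr_eq0 -lt0n.
Qed.

Lemma ler_pM_powR_inv (b c d : R) :
  0 <= b -> 0 <= d -> b ^+ m <= c -> b * powR d (m%:R)^-1 <= powR (c * d) (m%:R)^-1.
Proof.
move=> b_ge0 d_ge0 bm_le_c.
rewrite -{1}(powR_expr_inv_natr _ b_ge0) -powRM ?exprn_ge0 //.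
apply: ge0_ler_powR; rewrite ?invr_ge0 ?ler0n ?nnegrE ?mulr_ge0 ?exprn_ge0 //.
  exact: le_trans (exprn_ge0 m b_ge0) bm_le_c.
exact: ler_wpM2r.
Qed.

End NatRoots.

Section Expectations.
Variables (R : realType) (m n : nat) (a : 'I_n -> 'cV[R]_m).
Hypothesis m_gt0 : (0 < m)%N.

Lemma fM_expr_enum (J : finType) (A : {pred J}) (g : J -> 'I_n) :
  fM a [seq g j | j <- enum A] ^+ m =
  \det (\sum_j (j \in A)%:R *: (a (g j) *m (a (g j))^T)).
Proof.
rewrite /fM; have -> : \sum_(i <- [seq g j | j <- enum A]) a i *m (a i)^T =
    \sum_j (j \in A)%:R *: (a (g j) *m (a (g j))^T).
  rewrite big_map big_enum /= big_mkcond /=; apply: eq_bigr => j _.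
  by case: (j \in A); rewrite ?scale1r ?scale0r.
by rewrite powR_inv_natr_expr //; apply: det_sum_scale_outer_ge0 => j; rewrite ler0n.
Qed.

Lemma EAE (k : nat) (x : 'I_n -> R) : (0 < k)%N -> \sum_i x i = k%:R ->
  EA a k x = (k ^_ m)%:R / k%:R ^+ m * \det (\sum_i x i *: (a i *m (a i)^T)).
Proof.
move=> k_gt0 x_sum; set D := \det _.
have kR_neq0 : k%:R != 0 :> R by rewrite pnatr_eq0 -lt0n.
pose p i := x i / k%:R.
have p_sum1 : \sum_i p i = 1 by rewrite -mulr_suml x_sum divff.
have weighted_D : \sum_(tau : {ffun 'I_m -> 'I_n})
    (\prod_(r < m) p (tau r)) * diag_det_term (fun r => a (tau r)) = D / k%:R ^+ m.
  rewrite mulrC -exprVn -detZ scaler_sumr -det_sum_scale_outer.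
  by congr (\det _); apply: eq_bigr => i _; rewrite scalerA mulrC.
have inj_draws (sig : {ffun 'I_m -> 'I_k}) : injective sig ->
    \sum_(t : {ffun 'I_k -> 'I_n}) (\prod_(j < k) p (t j)) *
      diag_det_term (fun r => a (t (sig r))) = D / k%:R ^+ m.
  move=> sig_inj; rewrite -weighted_D -(sum_prod_weights_comp_inj p_sum1
    (fun tau => diag_det_term (fun r => a (tau r))) sig_inj).
  by apply: eq_bigr => t _; congr (_ * diag_det_term _); apply: funext => r; rewrite ffunE.
rewrite /EA.
under eq_bigr => t _ do rewrite (fM_expr_enum 'I_k) det_sum_scale_outer big_distrr /=.
rewrite exchange_big /=.
have inj_or_zero (sig : {ffun 'I_m -> 'I_k}) :
    \sum_(t : {ffun 'I_k -> 'I_n}) (\prod_(j < k) p (t j)) *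
      ((\prod_(r < m) 1) * diag_det_term (fun r => a (t (sig r)))) =
    if injectiveb sig then D / k%:R ^+ m else 0.
  case: (boolP (injectiveb sig)) => [/injectiveP/inj_draws <-|].
    by apply: eq_bigr => t _; rewrite big1_eq mul1r.
  move=> noninj; apply: big1 => t _.
  by rewrite (diag_det_term_comp_noninj (fun i => a (t i))) ?mulr0.
under eq_bigr => sig _ do rewrite inj_or_zero.
rewrite -big_mkcond /= sumr_const -cardsE card_inj_ffuns !card_ord.
by rewrite -[LHS]mulr_natl mulrA mulrAC.
Qed.

Lemma EBE (k q : nat) (lab : 'I_(q * k) -> 'I_n) (x : 'I_n -> R) :
  (m <= k)%N -> (0 < q)%N ->
  (forall i, (#|[set j | lab j == i]|)%:R = q%:R * x i) ->
  EB a lab = 'C(q * k - m, k - m)%:R / 'C(q * k, k)%:R * q%:R ^+ m *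
             \det (\sum_i x i *: (a i *m (a i)^T)).
Proof.
move=> m_le_k q_gt0 lab_count.
have k_le_qk : (k <= q * k)%N by apply: leq_pmull.
have sum_labels : \sum_(j : 'I_(q * k)) 1 *: (a (lab j) *m (a (lab j))^T) =
    q%:R *: \sum_i x i *: (a i *m (a i)^T).
  rewrite (sum_by_label lab (fun i => 1 *: (a i *m (a i)^T))) scaler_sumr.
  by apply: eq_bigr => i _; rewrite scalerA -lab_count scale1r scaler_nat.
rewrite /EB.
under eq_bigr => S _ do rewrite fM_expr_enum // det_sum_scale_outer.
rewrite -big_distrr /= exchange_big /=.
have per_rho (rho : {ffun 'I_m -> 'I_(q * k)}) :
    \sum_(S : {set 'I_(q * k)} | #|S| == k)
       (\prod_(r < m) (rho r \in S)%:R) * diag_det_term (fun r => a (lab (rho r))) =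
    'C(q * k - m, k - m)%:R * diag_det_term (fun r => a (lab (rho r))).
  rewrite -big_distrl /=; case: (boolP (injectiveb rho)) => [/injectiveP rho_inj|noninj].
    by rewrite sum_draws_prod_mem_inj ?card_ord // m_le_k.
  by rewrite (diag_det_term_comp_noninj (fun j => a (lab j))) // !mulr0.
under eq_bigr => rho _ do rewrite per_rho.
have -> : \sum_(rho : {ffun 'I_m -> 'I_(q * k)}) 'C(q * k - m, k - m)%:R *
    diag_det_term (fun r => a (lab (rho r))) = 'C(q * k - m, k - m)%:R * (q%:R ^+ m *
    \det (\sum_i x i *: (a i *m (a i)^T))).
  rewrite -big_distrr /= -detZ -sum_labels det_sum_scale_outer; congr (_ * _).
  by apply: eq_bigr => rho _; rewrite big1_eq mul1r.
by rewrite !mulrA [_^-1 * _]mulrC.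
Qed.

End Expectations.

Lemma wstar_le_relobj {R : realType} {m n k : nat} {a : 'I_n -> 'cV[R]_m} {x : 'I_n -> R} :
  relax_optimal a k x -> wstar a k <= relobj a x.
Proof.
move=> [_ [_ x_opt]]; apply: bigmax_le => [|y /eqP y_sum]; first exact: powR_ge0.
by apply: x_opt => [i|]; rewrite ?ler0n // -natr_sum y_sum.
Qed.

Theorem theorem5 (R : realType) (m k n : nat) (a : 'I_n -> 'cV[R]_m)
  (xhat : 'I_n -> rat) :
  (0 < m)%N -> (m <= k)%N -> (k <= n)%N ->
  relax_optimal a k (fun i => ratr (xhat i)) ->
  forall E : R,
    (E = EA a k (fun i => ratr (xhat i)) \/
     exists (q : nat) (lab : 'I_(q * k) -> 'I_n),
       (0 < q)%N /\
       (forall i, (#|[set j | lab j == i]|)%:R = q%:R * xhat i) /\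
       E = EB a lab) ->
    powR E (m%:R)^-1 >= (expR 1)^-1 * wstar a k /\
    (forall eps : R, 0 < eps < 1 -> (m%:R - 1) / eps <= k%:R ->
       powR E (m%:R)^-1 >= (1 - eps) * wstar a k).
Proof.
move=> m_gt0 m_le_k _ xhat_opt E E_def.
have wstar_le := wstar_le_relobj xhat_opt; case: xhat_opt => [xhat_ge0 [xhat_sum _]].
rewrite /relobj in wstar_le; set D := \det _ in wstar_le.
have D_ge0 : 0 <= D by apply: det_sum_scale_outer_ge0.
have [c [c_ge ->]] : exists c, (k ^_ m)%:R / k%:R ^+ m <= c /\ E = c * D.
  case: E_def => [->|[q [lab [q_gt0 [lab_count ->]]]]].
    exists ((k ^_ m)%:R / k%:R ^+ m); split => //.
    by rewrite EAE // (leq_trans m_gt0 m_le_k).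
  exists ('C(q * k - m, k - m)%:R / 'C(q * k, k)%:R * q%:R ^+ m).
  split; first exact: ffact_ratio_le_draws.
  apply: EBE => // i; have := congr1 (@ratr R) (lab_count i).
  by rewrite rmorphM /= !ratr_nat.
have lower b : 0 <= b -> b ^+ m <= (k ^_ m)%:R / k%:R ^+ m ->
    b * wstar a k <= powR (c * D) (m%:R)^-1.
  move=> b_ge0 bm_le; apply: le_trans (ler_wpM2l b_ge0 wstar_le) _.
  by apply: ler_pM_powR_inv => //; apply: le_trans c_ge.
split; first by apply: lower; [rewrite invr_ge0 expR_ge0 | exact: ffact_ratio_ge_expRN1].
move=> eps eps_range k_large; apply: lower; last exact: ffact_ratio_ge_1Beps.
by case/andP: eps_range => _ /ltW; rewrite subr_ge0.
Qed.
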